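(* Let $\gamma,h>0$, $\eta=e^{-\gamma h}$, $n\ge1$, and for $k\in\{0,\dots,n\}$ define \[ \alpha_k=(1-\eta^2)(1-\eta^{2n})k-2\eta(1+\eta^{n-k})(1-\eta^k)(1-\eta^n), \] \[ \beta_k=(1-\eta^2)\Bigl(\eta^{-k}(1-\eta^k)^2n+(1-\eta^n)^2k\Bigr)-2\eta^{1-k}(1-\eta^k)(1-\eta^n)(2-\eta^k-\eta^n). \] Then both $(\alpha_k)_{0\le k\le n}$ and $(\beta_k)_{0\le k\le n}$ are nondecreasing sequences. *)

From Stdlib Require Import Reals Lra Lia.
Open Scope R_scope.

(* alpha_k with eta, n, k ; eta^{n-k} is well defined since k <= n (nat subtraction). *)
Definition alpha (eta : R) (n k : nat) : R :=
  (1 - eta ^ 2) * (1 - eta ^ (2 * n)) * INR k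
  - 2 * eta * (1 + eta ^ (n - k)) * (1 - eta ^ k) * (1 - eta ^ n).

(* eta^{-k} = / eta^k and eta^{1-k} = eta / eta^k  (eta > 0). *)
Definition beta (eta : R) (n k : nat) : R :=
  (1 - eta ^ 2) * ( / (eta ^ k) * (1 - eta ^ k) ^ 2 * INR n
                    + (1 - eta ^ n) ^ 2 * INR k)
  - 2 * (eta / (eta ^ k)) * (1 - eta ^ k) * (1 - eta ^ n)
      * (2 - eta ^ k - eta ^ n).

From Stdlib Require Import Reals Lra Lia List.
Import ListNotations.
Open Scope R_scope.

(* With a = η^k and b = η^m, n = k + 1 + m,
   α_{k+1} - α_k factors as (1-η)(1-ηab)((1-ηa)(1-ηb) + η(1-a)(1-b)) ≥ 0.
   β_{k+1} - β_k is (1-η)/η^(k+1) times D(n, η^n, η^k), with D affine in a real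
   variable N standing for n.  D(n, η^n, η^k) ≥ 0 for k < n is proved by a double
   induction: along the diagonal n = k + 1 using the trapezoid bound
   2(1 - η^(k+1)) ≤ (k+1)(1-η)(1+η^k), and then in n, where each step adds (1-η)
   times a convex quadratic in c = η^n that decreases on [0, η^(k+1)].  The two
   residual polynomial inequalities on [0,1]² are certified by Bernstein expansions
   with nonnegative coefficients. *)

(* Coefficients are naturals (missing entries read as 0), so nonnegativity on the
   unit square is automatic. *)
Definition bernstein2 (d m : nat) (c : list (list nat)) (s t : R) : R :=
  sum_f_R0 (fun i => sum_f_R0 (fun j =>
    INR (nth j (nth i c []) 0%nat) * (s ^ i * (1 - s) ^ (d - i))
      * (t ^ j * (1 - t) ^ (m - j))) m) d.

Lemma bernstein2_nonneg d m c s t :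
  0 <= s <= 1 -> 0 <= t <= 1 -> 0 <= bernstein2 d m c s t.
Proof.
  intros Hs Ht; unfold bernstein2.
  apply cond_pos_sum; intro i; apply cond_pos_sum; intro j.
  repeat apply Rmult_le_pos; try apply pos_INR; apply pow_le; lra.
Qed.

Ltac bernstein_expand :=
  unfold bernstein2; cbn [sum_f_R0 nth Nat.sub];
  rewrite !INR_IZR_INZ; cbn [Z.of_nat Pos.of_succ_nat Pos.succ].

Lemma nondecreasing_upto (f : nat -> R) (n : nat) :
  (forall k, (S k <= n)%nat -> f k <= f (S k)) ->
  forall j k, (j <= k)%nat -> (k <= n)%nat -> f j <= f k.
Proof.
  intros Hstep j k Hjk; induction Hjk as [|k Hjk IH]; intros Hkn; [lra|].
  specialize (Hstep k Hkn); specialize (IH ltac:(lia)); lra.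
Qed.

Lemma alpha_succ_sub e k m :
  alpha e (S k + m) (S k) - alpha e (S k + m) k =
  (1 - e) * (1 - e * e ^ k * e ^ m)
  * ((1 - e ^ S k) * (1 - e ^ S m) + e * (1 - e ^ k) * (1 - e ^ m)).
Proof.
  unfold alpha.
  replace (S k + m - S k)%nat with m by lia.
  replace (S k + m - k)%nat with (S m) by lia.
  replace (2 * (S k + m))%nat with (S k + m + (S k + m))%nat by lia.
  rewrite !pow_add, S_INR; simpl; ring.
Qed.

Definition beta_diff (e N c x : R) : R :=
  (1 - e ^ 2) * N * (1 - e * x ^ 2) + (1 + e) * (1 - c) ^ 2 * e * x
  - 2 * e * (1 - c) * (2 - c) + 2 * e ^ 2 * (1 - c) * x ^ 2.

Lemma beta_succ_sub e n k : e <> 0 ->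
  beta e n (S k) - beta e n k =
  (1 - e) / e ^ S k * beta_diff e (INR n) (e ^ n) (e ^ k).
Proof.
  intros He; assert (e ^ k <> 0) by (apply pow_nonzero; exact He).
  unfold beta, beta_diff; rewrite S_INR; simpl; field; auto.
Qed.

Definition beta_diff_step (e x c : R) : R :=
  (1 + e) * (1 - e * x ^ 2) + (1 + e) * e * x * c * (2 - (1 + e) * c)
  - 2 * e * c * (3 - (1 + e) * c) + 2 * e ^ 2 * x ^ 2 * c.

Lemma beta_diff_succ e N c x :
  beta_diff e (N + 1) (e * c) x - beta_diff e N c x = (1 - e) * beta_diff_step e x c.
Proof. unfold beta_diff, beta_diff_step; ring. Qed.

Definition beta_diff_step_corner_coefs : list (list nat) :=
  [[1; 3; 3; 1]; [6; 18; 17; 5]; [14; 36; 27; 5]; [16; 30; 13]; [9; 9]; [2]]%nat.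

Definition beta_diff_diag_coefs : list (list nat) :=
  [[1; 5; 9; 7; 2]; [7; 34; 61; 48; 14]; [20; 88; 146; 106; 28];
   [30; 112; 159; 94; 18]; [25; 73; 79; 28]; [11; 22; 14]; [2; 2]]%nat.

Lemma beta_diff_step_corner e x :
  beta_diff_step e x (e * x) = bernstein2 5 3 beta_diff_step_corner_coefs e x.
Proof. unfold beta_diff_step, beta_diff_step_corner_coefs; bernstein_expand; ring. Qed.

Lemma beta_diff_diag_succ e N x :
  (1 + x) * (beta_diff e (N + 1) (e * (e * x)) (e * x) - beta_diff e N (e * x) x) =
  bernstein2 7 4 beta_diff_diag_coefs e x
  + (1 - e ^ 2) * (1 + e) * e * x ^ 2 * (N * (1 - e) * (1 + x) - 2 * (1 - e * x)).
Proof. unfold beta_diff, beta_diff_diag_coefs; bernstein_expand; ring. Qed.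

Section ContractionRatio.

Variable e : R.
Hypothesis He : 0 < e < 1.

Lemma pow_unit_interval n : 0 < e ^ n <= 1.
Proof.
  split; [apply pow_lt; lra|].
  rewrite <- (pow1 n); apply pow_incr; lra.
Qed.

Lemma alpha_step n k : (S k <= n)%nat -> alpha e n k <= alpha e n (S k).
Proof.
  intros Hk; destruct (Nat.le_exists_sub (S k) n Hk) as [m [-> _]].
  rewrite Nat.add_comm; pose proof (alpha_succ_sub e k m) as Hdiff.
  pose proof (pow_unit_interval k); pose proof (pow_unit_interval m).
  pose proof (pow_unit_interval (S k)); pose proof (pow_unit_interval (S m)).
  assert (e * e ^ k * e ^ m <= 1) by (rewrite tech_pow_Rmult; nra).
  enough (0 <= (1 - e) * (1 - e * e ^ k * e ^ m)
    * ((1 - e ^ S k) * (1 - e ^ S m) + e * (1 - e ^ k) * (1 - e ^ m))) by lra.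
  apply Rmult_le_pos; [apply Rmult_le_pos; lra|].
  apply Rplus_le_le_0_compat; repeat apply Rmult_le_pos; lra.
Qed.

Lemma one_sub_pow_lower m : INR (S m) * (1 - e) * e ^ m <= 1 - e ^ S m.
Proof.
  induction m as [|m IH]; [simpl; lra|].
  rewrite (S_INR (S m)).
  change (e ^ S (S m)) with (e * e ^ S m); change (e ^ S m) with (e * e ^ m) in *.
  pose proof (pow_unit_interval m); pose proof (pos_INR (S m)).
  assert (0 <= INR (S m) * (1 - e) * e ^ m * (1 - e)) by (repeat apply Rmult_le_pos; lra).
  lra.
Qed.

Lemma one_sub_pow_upper m : 2 * (1 - e ^ S m) <= INR (S m) * (1 - e) * (1 + e ^ m).
Proof.
  induction m as [|m IH]; [simpl; lra|].
  pose proof (one_sub_pow_lower m).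
  rewrite (S_INR (S m)).
  change (e ^ S (S m)) with (e * e ^ S m); change (e ^ S m) with (e * e ^ m) in *.
  assert (0 <= (1 - e) * (1 - e * e ^ m - INR (S m) * (1 - e) * e ^ m)) by (apply Rmult_le_pos; lra).
  lra.
Qed.

Lemma beta_diff_step_ge_corner x c : 0 <= x <= 1 -> 0 <= c <= e * x ->
  beta_diff_step e x (e * x) <= beta_diff_step e x c.
Proof.
  intros Hx Hc.
  (* Convex in c, with its vertex to the right of e x. *)
  set (D := 2 - (1 + e) * x).
  set (V := (1 - e) ^ 2 * (2 + e) + (1 - x) * (1 - e) * (1 + 4 * e + 2 * e ^ 2)
            + (1 - x) ^ 2 * e ^ 2 * (2 + e)).
  assert (0 <= D) by (unfold D; nra).
  assert (0 <= V).
  { assert (0 <= 1 - e) by lra; assert (0 <= 1 - x) by lra.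
    unfold V; set (u := 1 - e) in *; set (y := 1 - x) in *; clearbody u y.
    repeat first [apply Rplus_le_le_0_compat | apply Rmult_le_pos | apply pow_le]; lra. }
  assert ((1 + e) * D * (c + e * x) <= (1 + e) * D * (2 * e * x))
    by (apply Rmult_le_compat_l; [apply Rmult_le_pos|]; lra).
  assert (2 * (3 - x - e * x - e * x ^ 2) - (1 + e) * D * (2 * e * x) = 2 * V)
    by (unfold D, V; ring).
  assert (beta_diff_step e x c - beta_diff_step e x (e * x) =
          (e * x - c) * e * (2 * (3 - x - e * x - e * x ^ 2) - (1 + e) * D * (c + e * x)))
    by (unfold beta_diff_step, D; ring).
  enough (0 <= (e * x - c) * e * (2 * (3 - x - e * x - e * x ^ 2) - (1 + e) * D * (c + e * x)))
    by lra.
  apply Rmult_le_pos; [apply Rmult_le_pos|]; lra.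
Qed.

Lemma beta_diff_step_nonneg x c : 0 <= x <= 1 -> 0 <= c <= e * x ->
  0 <= beta_diff_step e x c.
Proof.
  intros Hx Hc.
  eapply Rle_trans; [|apply beta_diff_step_ge_corner; assumption].
  rewrite beta_diff_step_corner; apply bernstein2_nonneg; lra.
Qed.

Lemma beta_diff_diag_nonneg k : 0 <= beta_diff e (INR (S k)) (e ^ S k) (e ^ k).
Proof.
  induction k as [|k IH].
  - replace (beta_diff e (INR 1) (e ^ 1) (e ^ 0)) with ((1 - e) ^ 4)
      by (unfold beta_diff; simpl; ring).
    apply pow_le; lra.
  - pose proof (one_sub_pow_upper k) as Hupper.
    pose proof (pow_unit_interval k).
    rewrite (S_INR (S k)).
    change (e ^ S (S k)) with (e * (e * e ^ k)); change (e ^ S k) with (e * e ^ k) in *.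
    pose proof (beta_diff_diag_succ e (INR (S k)) (e ^ k)) as Hid.
    set (x := e ^ k) in *; set (N := INR (S k)) in *.
    assert (0 <= bernstein2 7 4 beta_diff_diag_coefs e x)
      by (apply bernstein2_nonneg; lra).
    assert (0 <= (1 - e ^ 2) * (1 + e) * e * x ^ 2) by
      (repeat apply Rmult_le_pos; try apply pow_le; nra).
    assert (0 <= (1 + x) * (beta_diff e (N + 1) (e * (e * x)) (e * x) - beta_diff e N (e * x) x))
      by (rewrite Hid; apply Rplus_le_le_0_compat; [|apply Rmult_le_pos]; lra).
    assert (0 <= beta_diff e (N + 1) (e * (e * x)) (e * x) - beta_diff e N (e * x) x)
      by (apply (Rmult_le_reg_l (1 + x)); lra).
    lra.
Qed.

Lemma beta_diff_nonneg k m :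
  0 <= beta_diff e (INR (S k + m)) (e ^ (S k + m)) (e ^ k).
Proof.
  induction m as [|m IH]; [rewrite Nat.add_0_r; apply beta_diff_diag_nonneg|].
  rewrite Nat.add_succ_r, S_INR; change (e ^ S (S k + m)) with (e * e ^ (S k + m)).
  pose proof (beta_diff_succ e (INR (S k + m)) (e ^ (S k + m)) (e ^ k)).
  pose proof (pow_unit_interval k); pose proof (pow_unit_interval m).
  assert (Hc : e ^ (S k + m) = e * e ^ k * e ^ m) by (rewrite pow_add; simpl; ring).
  assert (0 <= e * e ^ k) by (apply Rmult_le_pos; lra).
  assert (0 <= beta_diff_step e (e ^ k) (e ^ (S k + m))).
  { apply beta_diff_step_nonneg; [lra|]; rewrite Hc; nra. }
  assert (0 <= (1 - e) * beta_diff_step e (e ^ k) (e ^ (S k + m)))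
    by (apply Rmult_le_pos; lra).
  lra.
Qed.

Lemma beta_step n k : (S k <= n)%nat -> beta e n k <= beta e n (S k).
Proof.
  intros Hk; destruct (Nat.le_exists_sub (S k) n Hk) as [m [-> _]].
  rewrite Nat.add_comm.
  pose proof (beta_succ_sub e (S k + m) k ltac:(lra)).
  pose proof (pow_unit_interval (S k)).
  assert (0 <= (1 - e) / e ^ S k * beta_diff e (INR (S k + m)) (e ^ (S k + m)) (e ^ k)).
  { apply Rmult_le_pos; [|apply beta_diff_nonneg].
    apply Rmult_le_pos; [lra|]; apply Rlt_le, Rinv_0_lt_compat; lra. }
  lra.
Qed.

End ContractionRatio.

Theorem mainTheorem18 (gamma h : R) (n : nat) :
  0 < gamma -> 0 < h -> (1 <= n)%nat ->
  let eta := exp (- (gamma * h)) in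
  (forall j k : nat, (j <= k)%nat -> (k <= n)%nat ->
     alpha eta n j <= alpha eta n k) /\
  (forall j k : nat, (j <= k)%nat -> (k <= n)%nat ->
     beta eta n j <= beta eta n k).
Proof.
  intros Hgamma Hh _ eta.
  assert (Heta : 0 < eta < 1).
  { split; [apply exp_pos|].
    rewrite <- exp_0; apply exp_increasing; nra. }
  split; apply nondecreasing_upto.
  - exact (alpha_step eta Heta n).
  - exact (beta_step eta Heta n).
Qed.
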